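(* Let $G$ be a group with identity $e$, $A$ a set with at least two elements, and $\tau : A^G \to A^G$ a non-constant cellular automaton with minimal local map $\mu : A^S \to A$. Then $\tau$ is lazy if and only if $e \in S$ and $\mu$ has a unique active transition, i.e., there is exactly one $z \in A^S$ with $\mu(z) \neq z(e)$.
   Context: $A^G$ is the set of maps $G \to A$ with shift action $(g\cdot x)(h) := x(hg)$. A cellular automaton is a map $\tau : A^G \to A^G$ with a finite $S \subseteq G$ (a neighborhood) and local map $\mu : A^S \to A$ such that $\tau(x)(g) = \mu((g\cdot x)|_S)$ for all $x, g$. The minimal neighborhood of $\tau$ is the (unique) neighborhood of smallest cardinality, and the minimal local map is the local defining map on the minimal neighborhood. $\tau$ is lazy if there is a local defining map $\mu : A^S \to A$ for $\tau$ with $e \in S$ and $p \in A^S$ such that for all $z \in A^S$: $\mu(z) = z(e)$ iff $z \neq p$. An active transition of $\mu : A^S \to A$ (with $e \in S$) is a pattern $z \in A^S$ with $\mu(z) \neq z(e)$. *)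

From Stdlib Require Import List Arith.
Import ListNotations.


Definition finite_card {T : Type} (S : T -> Prop) (n : nat) : Prop :=
  exists l : list T, NoDup l /\ (forall g, S g <-> In g l) /\ length l = n.

Definition pattern {G : Type} (S : G -> Prop) (A : Type) : Type :=
  {g : G | S g} -> A.

Definition shift {G A : Type} (mul : G -> G -> G) (g : G) (x : G -> A) : G -> A :=
  fun h => x (mul h g).

Definition restr {G A : Type} (S : G -> Prop) (x : G -> A) : pattern S A :=
  fun s => x (proj1_sig s).

Definition is_local_map {G A : Type} (mul : G -> G -> G)
  (tau : (G -> A) -> (G -> A)) (S : G -> Prop) (mu : pattern S A -> A) : Prop :=
  forall (x : G -> A) (g : G), tau x g = mu (@restr G A S (shift mul g x)).

Definition neighborhood {G A : Type} (mul : G -> G -> G)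
  (tau : (G -> A) -> (G -> A)) (S : G -> Prop) : Prop :=
  (exists n, finite_card S n) /\ exists mu : pattern S A -> A, is_local_map mul tau S mu.

Definition cellular_automaton {G A : Type} (mul : G -> G -> G)
  (tau : (G -> A) -> (G -> A)) : Prop :=
  exists S : G -> Prop, neighborhood mul tau S.

Definition minimal_neighborhood {G A : Type} (mul : G -> G -> G)
  (tau : (G -> A) -> (G -> A)) (S : G -> Prop) : Prop :=
  neighborhood mul tau S /\
  exists n, finite_card S n /\
    forall (S' : G -> Prop) m, neighborhood mul tau S' -> finite_card S' m -> n <= m.

Definition lazy {G A : Type} (mul : G -> G -> G) (e : G)
  (tau : (G -> A) -> (G -> A)) : Prop :=
  exists (S : G -> Prop) (He : S e) (mu : pattern S A -> A) (p : pattern S A),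
    (exists n, finite_card S n) /\ is_local_map mul tau S mu /\
    forall z : pattern S A, mu z = z (exist _ e He) <-> z <> p.

Definition active_transition {G A : Type} (S : G -> Prop) (e : G) (He : S e)
  (mu : pattern S A -> A) (z : pattern S A) : Prop :=
  mu z <> z (exist _ e He).

From Stdlib Require Import List Arith Lia.
From Stdlib Require Import Classical ClassicalDescription FunctionalExtensionality ProofIrrelevance.

(* Intersections of neighborhoods are neighborhoods, so the minimal neighborhood S
   lies inside the neighborhood S' of any lazy local map, say with exceptional
   pattern p.  If e were not in S, then tau x at e would ignore x e; yet a lazy map
   copies x e as soon as x disagrees with p at some point of S' other than e, and
   if S' has no such point then S is empty and tau is constant.  Once e is in S, a
   pattern on S is active exactly when its extensions restrict to p on S', i.e.
   exactly when it is the restriction of p to S. *)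

Lemma finite_card_inter_lt {T : Type} (S S' : T -> Prop) (n : nat) (g : T) :
  finite_card S n -> S g -> ~ S' g ->
  exists m, m < n /\ finite_card (fun h => S h /\ S' h) m.
Proof.
  intros [l [Hnd [Hl Hlen]]] Hg Hng.
  set (f := fun h => if excluded_middle_informative (S' h) then true else false).
  exists (length (filter f l)); split.
  - assert (Hneq : length (filter f l) <> length l).
    { intro Heq. apply filter_length_forallb in Heq. rewrite forallb_forall in Heq.
      specialize (Heq g (proj1 (Hl g) Hg)). unfold f in Heq.
      destruct (excluded_middle_informative (S' g)); [contradiction | discriminate]. }
    pose proof (filter_length_le f l). lia.
  - exists (filter f l); split; [apply NoDup_filter; exact Hnd | split; [|reflexivity]].
    intro h. rewrite filter_In, <- Hl. unfold f.
    destruct (excluded_middle_informative (S' h)); intuition discriminate.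
Qed.

Definition extend {G A : Type} (S : G -> Prop) (z : pattern S A) (d : G -> A) : G -> A :=
  fun g => match excluded_middle_informative (S g) with
           | left H => z (exist _ g H)
           | right _ => d g
           end.

Lemma extend_in {G A : Type} (S : G -> Prop) (z : pattern S A) (d : G -> A) g (H : S g) :
  extend S z d g = z (exist _ g H).
Proof.
  unfold extend; destruct (excluded_middle_informative (S g)) as [H'|]; [|contradiction].
  now rewrite (proof_irrelevance _ H' H).
Qed.

Lemma restr_extend {G A : Type} (S : G -> Prop) (z : pattern S A) (d : G -> A) :
  restr S (extend S z d) = z.
Proof.
  apply functional_extensionality; intros [g H]; apply extend_in.
Qed.

Section LocalMaps.

Context {G A : Type} {mul : G -> G -> G} {e : G}.
Hypothesis mulg1 : forall a, mul a e = a.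
Context {tau : (G -> A) -> (G -> A)}.

Lemma local_map_at_unit {S} {mu : pattern S A -> A} :
  is_local_map mul tau S mu -> forall x, tau x e = mu (restr S x).
Proof.
  intros Hmu x. rewrite Hmu. f_equal.
  apply functional_extensionality; intros [g H]; unfold restr, shift; simpl.
  now rewrite mulg1.
Qed.

Lemma local_map_extend {S} {mu : pattern S A -> A} :
  is_local_map mul tau S mu -> forall z d, mu z = tau (extend S z d) e.
Proof.
  intros Hmu z d. now rewrite (local_map_at_unit Hmu), restr_extend.
Qed.

Lemma local_map_shift {S} {mu : pattern S A -> A} :
  is_local_map mul tau S mu -> forall x g, tau x g = tau (shift mul g x) e.
Proof.
  intros Hmu x g. now rewrite (local_map_at_unit Hmu), Hmu.
Qed.

Lemma local_map_agree {S} {mu : pattern S A -> A} :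
  is_local_map mul tau S mu ->
  forall x y, (forall g, S g -> x g = y g) -> tau x e = tau y e.
Proof.
  intros Hmu x y Hxy. rewrite !(local_map_at_unit Hmu). f_equal.
  apply functional_extensionality; intros [g H]; apply Hxy, H.
Qed.

Lemma local_map_empty_const {S} {mu : pattern S A -> A} :
  is_local_map mul tau S mu -> (forall g, ~ S g) -> forall x y, tau x = tau y.
Proof.
  intros Hmu HS x y. apply functional_extensionality; intro g. rewrite !Hmu. f_equal.
  apply functional_extensionality; intros [h H]. contradiction (HS h H).
Qed.

Lemma local_map_inter (a : A) {S1 S2} {mu1 : pattern S1 A -> A} {mu2 : pattern S2 A -> A} :
  is_local_map mul tau S1 mu1 -> is_local_map mul tau S2 mu2 ->
  exists mu, is_local_map mul tau (fun g => S1 g /\ S2 g) mu.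
Proof.
  intros H1 H2. set (S12 := fun g => S1 g /\ S2 g).
  exists (fun w => tau (extend S12 w (fun _ => a)) e); intros x g.
  rewrite (local_map_shift H1). set (y := shift mul g x).
  set (w := extend S12 (restr S12 y) (fun _ => a)).
  (* [v] agrees with [y] on [S1] and with [w] on [S2]. *)
  set (v := fun h => if excluded_middle_informative (S1 h) then y h else w h).
  transitivity (tau v e).
  - apply (local_map_agree H1); intros h Hh; unfold v.
    destruct (excluded_middle_informative (S1 h)); tauto.
  - apply (local_map_agree H2); intros h Hh; unfold v.
    destruct (excluded_middle_informative (S1 h)) as [H1h|]; [|reflexivity].
    unfold w; now rewrite (extend_in S12 _ _ h (conj H1h Hh)).
Qed.

Lemma minimal_neighborhood_sub (a : A) {S S'} {mu' : pattern S' A -> A} :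
  minimal_neighborhood mul tau S -> is_local_map mul tau S' mu' ->
  forall g, S g -> S' g.
Proof.
  intros [[_ [mu Hmu]] [n [Hn Hmin]]] Hmu' g Hg. apply NNPP; intro Hng.
  destruct (finite_card_inter_lt S S' n g Hn Hg Hng) as [m [Hmn Hm]].
  assert (Hnb : neighborhood mul tau (fun h => S h /\ S' h)).
  { split; [exists m; exact Hm | exact (local_map_inter a Hmu Hmu')]. }
  specialize (Hmin _ _ Hnb Hm). lia.
Qed.

Section LazyLocalMap.

Context {S' : G -> Prop} {He' : S' e} {mu' : pattern S' A -> A} {p : pattern S' A}.
Hypothesis Hmu' : is_local_map mul tau S' mu'.
Hypothesis Hlazy : forall z, mu' z = z (exist _ e He') <-> z <> p.

Lemma lazy_depends_on_unit (s : G) :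
  S' s -> s <> e -> (exists a b : A, a <> b) ->
  exists x y, (forall h, h <> e -> x h = y h) /\ tau x e <> tau y e.
Proof.
  intros Hs Hse [a [b Hab]].
  set (q := if excluded_middle_informative (a = p (exist _ s Hs)) then b else a).
  assert (Hq : q <> p (exist _ s Hs)).
  { unfold q; destruct (excluded_middle_informative (a = p (exist _ s Hs))); congruence. }
  set (x := fun c h => if excluded_middle_informative (h = e) then c else q).
  (* [x c] misses [p] at [s], so the lazy map copies its value [c] at [e]. *)
  assert (Htx : forall c, tau (x c) e = c).
  { intro c. rewrite (local_map_at_unit Hmu').
    assert (Hne : restr S' (x c) <> p).
    { intro Heq. apply Hq. rewrite <- Heq. unfold restr, x; simpl.
      destruct (excluded_middle_informative (s = e)); [contradiction | reflexivity]. }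
    apply Hlazy in Hne. rewrite Hne. unfold restr, x; simpl.
    destruct (excluded_middle_informative (e = e)); [reflexivity | contradiction]. }
  exists (x a), (x b); split.
  - intros h Hh; unfold x. destruct (excluded_middle_informative (h = e)); tauto.
  - now rewrite !Htx.
Qed.

Lemma lazy_unit_in_neighborhood {S} {mu : pattern S A -> A} :
  is_local_map mul tau S mu -> (forall g, S g -> S' g) ->
  (exists a b : A, a <> b) -> (exists x y, tau x <> tau y) -> S e.
Proof.
  intros Hmu Hsub HA [x [y Hxy]]. apply NNPP; intro HSe.
  destruct (classic (exists s, S' s /\ s <> e)) as [[s [Hs Hse]]|Hno].
  - destruct (lazy_depends_on_unit s Hs Hse HA) as [x' [y' [Hagree Hdiff]]].
    apply Hdiff, (local_map_agree Hmu); intros h Hh.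
    apply Hagree; intros ->; contradiction.
  - apply Hxy, (local_map_empty_const Hmu); intros g Hg.
    apply Hno; exists g; split; [exact (Hsub g Hg)|]. intros ->; contradiction.
Qed.

Lemma lazy_active_transition_iff {S} (He : S e) {mu : pattern S A -> A} (d : G -> A) :
  is_local_map mul tau S mu -> (forall g, S g -> S' g) ->
  forall z, active_transition S e He mu z <-> z = restr S (extend S' p d).
Proof.
  intros Hmu Hsub z; unfold active_transition; split.
  - intros Hz. set (X := extend S z (extend S' p d)).
    assert (HX : restr S' X = p).
    { apply NNPP; intro Hne. apply Hz.
      rewrite (local_map_extend Hmu z (extend S' p d)); fold X.
      rewrite (local_map_at_unit Hmu'), (proj2 (Hlazy _) Hne).
      unfold restr, X; simpl. apply extend_in. }
    apply functional_extensionality; intros [s Hs]. unfold restr; simpl.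
    rewrite (extend_in S' p d s (Hsub s Hs)), <- HX. unfold restr, X; simpl.
    symmetry; apply extend_in.
  - intros ->.
    rewrite <- (local_map_at_unit Hmu), (local_map_at_unit Hmu'), restr_extend.
    unfold restr; simpl. rewrite (extend_in S' p d e He').
    intro Hp. apply Hlazy in Hp. contradiction.
Qed.

End LazyLocalMap.

End LocalMaps.

Theorem proposition1
  (G : Type) (mul : G -> G -> G) (e : G) (inv : G -> G)
  (mulA : forall a b c, mul a (mul b c) = mul (mul a b) c)
  (mul1g : forall a, mul e a = a) (mulg1 : forall a, mul a e = a)
  (mulVg : forall a, mul (inv a) a = e)
  (A : Type) (A2 : exists a b : A, a <> b)
  (tau : (G -> A) -> (G -> A)) (S : G -> Prop) (mu : pattern S A -> A)
  (HS : minimal_neighborhood mul tau S) (Hmu : is_local_map mul tau S mu)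
  (Hnc : exists x y : G -> A, tau x <> tau y) :
  lazy mul e tau <->
  exists He : S e, exists! z : pattern S A, active_transition S e He mu z.
Proof.
  split.
  - intros [S' [He' [mu' [p [_ [Hmu' Hlazy]]]]]].
    pose proof A2 as [a _].
    pose proof (minimal_neighborhood_sub mulg1 a HS Hmu') as Hsub.
    pose proof (lazy_unit_in_neighborhood mulg1 Hmu' Hlazy Hmu Hsub A2 Hnc) as He.
    pose proof (lazy_active_transition_iff mulg1 Hmu' Hlazy He (fun _ => a) Hmu Hsub)
      as Hactive.
    exists He, (restr S (extend S' p (fun _ => a))); split.
    + now apply Hactive.
    + intros z Hz; symmetry; now apply Hactive.
  - intros [He [p [Hp Huniq]]].
    destruct HS as [[Hfin _] _].
    exists S, He, mu, p; split; [exact Hfin | split; [exact Hmu|]].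
    intro z; split.
    + intros Hz ->. exact (Hp Hz).
    + intros Hne. apply NNPP; intro Hz. exact (Hne (eq_sym (Huniq z Hz))).
Qed.
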